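(* Let $\mathcal{X}=\mathbb{R}^d$ with Euclidean metric $|\cdot|_2$, let $\mu,\nu$ be Borel probability measures on $\mathbb{R}^d$ with $\nu$ having finite first moment and not a Dirac measure, and let $\pi\in\Pi(\mu,\nu)$. Define $$T^{\mathrm{DGS}}(\pi)=1-\frac{\int\int\int|y-z|_2\,\pi_{x_1}(dy)\,\pi_{x_1}(dz)\,\mu(dx_1)}{\int\int|y-z|_2\,\nu(dy)\,\nu(dz)}.$$ Then $T^{\mathrm{DGS}}(\pi)\le 2\,\overrightarrow{\mathcal{W}}(\pi)$.
   Context: $\Pi(\mu,\nu)$ is the set of couplings of $\mu,\nu$; $\pi_{x_1}$ is the disintegration of $\pi$ w.r.t. the first coordinate. $\mathcal{W}(\alpha,\beta)=\inf_{\gamma\in\Pi(\alpha,\beta)}\int|x-y|_2\,\gamma(dx,dy)$. The Wasserstein correlation coefficient is $\overrightarrow{\mathcal{W}}(\pi)=\int\mathcal{W}(\pi_{x_1},\nu)\,\mu(dx_1)\big/\int\int|y-z|_2\,\nu(dy)\nu(dz)$. *)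

From HB Require Import structures.
From mathcomp Require Import all_boot all_order all_algebra.
From mathcomp Require Import all_classical all_reals all_analysis.
Set Implicit Arguments. Unset Strict Implicit. Unset Printing Implicit Defensive.
Import Order.TTheory GRing.Theory Num.Theory.
Import numFieldNormedType.Exports.
Local Open Scope classical_set_scope.
Local Open Scope ring_scope.

(* R^d as row vectors, equipped with its Borel sigma-algebra
   (generated by the open sets of the product = Euclidean topology). *)
Definition Rd (R : realType) (d : nat) : measurableType _ :=
  g_sigma_algebraType (open : set (set 'rV[R]_d)).

Definition eucl_dist (R : realType) (d : nat) (y z : 'rV[R]_d) : R :=
  Num.sqrt (\sum_(i < d) (y ord0 i - z ord0 i) ^+ 2).

Definition coupling {d1 d2} {T1 : measurableType d1} {T2 : measurableType d2}
  (R : realType) (mu : set T1 -> \bar R) (nu : set T2 -> \bar R)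
  (pi : probability (T1 * T2)%type R) : Prop :=
  (forall A : set T1, measurable A -> pi (A `*` setT) = mu A) /\
  (forall B : set T2, measurable B -> pi (setT `*` B) = nu B).

Definition disintegration {d1 d2} {T1 : measurableType d1} {T2 : measurableType d2}
  (R : realType) (mu : probability T1 R) (pi : probability (T1 * T2)%type R)
  (k : R.-pker T1 ~> T2) : Prop :=
  forall (A : set T1) (B : set T2), measurable A -> measurable B ->
    pi (A `*` B) = (\int[mu]_(x in A) k x B)%E.

Definition W1 (R : realType) (d : nat)
  (alpha beta : set (Rd R d) -> \bar R) : \bar R :=
  ereal_inf [set (\int[gamma]_p (eucl_dist p.1 p.2)%:E)%E
            | gamma in [set gamma : probability (Rd R d * Rd R d)%type R
                       | coupling alpha beta gamma]].

Local Open Scope ereal_scope.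

(* extended-real division by a (finite, positive) extended real *)
Definition ediv (R : realType) (a b : \bar R) : \bar R := a * ((fine b)^-1)%:E.

(* T^DGS(pi), with pi_{x1} given by the disintegration kernel k *)
Definition T_DGS (R : realType) (d : nat) (mu nu : probability (Rd R d) R)
  (k : R.-pker (Rd R d) ~> (Rd R d)) : \bar R :=
  1 - ediv (\int[mu]_x1 \int[k x1]_y \int[k x1]_z (eucl_dist y z)%:E)
           (\int[nu]_y \int[nu]_z (eucl_dist y z)%:E).

Definition W_corr (R : realType) (d : nat) (mu nu : probability (Rd R d) R)
  (k : R.-pker (Rd R d) ~> (Rd R d)) : \bar R :=
  ediv (\int[mu]_x1 W1 (k x1) nu)
       (\int[nu]_y \int[nu]_z (eucl_dist y z)%:E).

From HB Require Import structures.
From mathcomp Require Import all_boot all_order all_algebra.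
From mathcomp Require Import all_classical all_reals all_analysis.
From mathcomp Require Import ring lra.
From mathcomp Require Import measurable_realfun.
Set Implicit Arguments. Unset Strict Implicit. Unset Printing Implicit Defensive.
Import Order.TTheory GRing.Theory Num.Theory.
Import numFieldNormedType.Exports.
Local Open Scope classical_set_scope.
Local Open Scope ring_scope.

(* T^DGS(pi) <= 2 W(pi): the triangle inequality, averaged over couplings.

   For a probability m on R^d let h_m(y) = \int |y - z| m(dz) be the mean
   distance to m and E(m) = \int h_m dm its mean interpoint distance.  By
   the triangle inequality h_m is 1-Lipschitz, so for every coupling g of
   p and nu, \int h_m dnu <= cost(g) + \int h_m dp with
   cost(g) = \int |y - y'| g(dy, dy').  Applied with m = nu and m = p, and
   using the symmetry \int h_nu dp = \int h_p dnu (Fubini), this gives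
   E(nu) <= 2 cost(g) + E(p); taking the infimum over g,
   E(nu) <= 2 W1(p, nu) + E(p).  Applying this to p = pi_{x1} = k x1,
   integrating against mu(dx1) and dividing by E(nu), which is finite by
   the moment assumption and positive because nu is not a Dirac mass,
   yields the theorem.

   Since x1 |-> W1(k x1, nu) is not known to be measurable, we integrate the
   measurable minorant max((E(nu) - E(k x1))/2, 0) instead and compare it
   with W1 through the monotonicity of the nonnegative integral, which holds
   for arbitrary nonnegative integrands. *)

Section cauchy_schwarz.
Variables (R : rcfType) (I : finType).

Lemma sum_sqr_eq0 (a : I -> R) : \sum_i a i ^+ 2 = 0 -> forall i, a i = 0.
Proof.
move=> /(psumr_eq0P (fun i _ => sqr_ge0 (a i))) a0 i.
by apply/eqP; rewrite -sqrf_eq0 a0.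
Qed.

Lemma cauchy_schwarz (a b : I -> R) :
  \sum_i a i * b i <= Num.sqrt (\sum_i a i ^+ 2) * Num.sqrt (\sum_i b i ^+ 2).
Proof.
have sum_sqr_ge0 (c : I -> R) : 0 <= \sum_i c i ^+ 2.
  by apply: sumr_ge0 => i _; exact: sqr_ge0.
set s := Num.sqrt _; set t := Num.sqrt _.
have s2 : s ^+ 2 = \sum_i a i ^+ 2 by rewrite sqr_sqrtr.
have t2 : t ^+ 2 = \sum_i b i ^+ 2 by rewrite sqr_sqrtr.
have [s0|s_neq0] := eqVneq s 0.
  have a0 : forall i, a i = 0 by apply: sum_sqr_eq0; rewrite -s2 s0 expr0n.
  by rewrite s0 mul0r big1 // => i _; rewrite a0 mul0r.
have [t0|t_neq0] := eqVneq t 0.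
  have b0 : forall i, b i = 0 by apply: sum_sqr_eq0; rewrite -t2 t0 expr0n.
  by rewrite t0 mulr0 big1 // => i _; rewrite b0 mulr0.
have s_gt0 : 0 < s by rewrite lt_def s_neq0 sqrtr_ge0.
have t_gt0 : 0 < t by rewrite lt_def t_neq0 sqrtr_ge0.
(* expand 0 <= \sum_i (t a_i - s b_i)^2 *)
have key : 2 * s * t * \sum_i a i * b i <= 2 * s * t * (s * t).
  have -> : 2 * s * t * (s * t) = \sum_i (t ^+ 2 * a i ^+ 2 + s ^+ 2 * b i ^+ 2).
    by rewrite big_split /= -!mulr_sumr -s2 -t2; ring.
  rewrite mulr_sumr; apply: ler_sum => i _.
  have := sqr_ge0 (t * a i - s * b i); nra.
by rewrite ler_pM2l ?mulr_gt0 in key.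
Qed.

End cauchy_schwarz.

Section euclidean_distance.
Variables (R : realType) (d : nat).
Implicit Types x y z : 'rV[R]_d.

Lemma dist_ge0 x y : 0 <= eucl_dist x y.
Proof. exact: sqrtr_ge0. Qed.

Lemma distC x y : eucl_dist x y = eucl_dist y x.
Proof.
by congr Num.sqrt; apply: eq_bigr => i _; rewrite -sqrrN opprB.
Qed.

(* Squaring both sides, the triangle inequality is Cauchy-Schwarz. *)
Lemma dist_triangle x y z : eucl_dist x z <= eucl_dist x y + eucl_dist y z.
Proof.
have cs := cauchy_schwarz (fun i : 'I_d => x ord0 i - y ord0 i)
                          (fun i => y ord0 i - z ord0 i).
have sum_sqr_ge0 (c : 'I_d -> R) : 0 <= \sum_i c i ^+ 2.
  by apply: sumr_ge0 => i _; exact: sqr_ge0.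
rewrite -[leRHS]ger0_norm ?addr_ge0 ?dist_ge0 // -sqrtr_sqr ler_sqrt ?sqr_ge0 //.
rewrite sqrrD /eucl_dist !sqr_sqrtr //.
have -> : \sum_(i < d) (x ord0 i - z ord0 i) ^+ 2 =
    \sum_(i < d) (x ord0 i - y ord0 i) ^+ 2 + \sum_(i < d) (y ord0 i - z ord0 i) ^+ 2
    + 2 * \sum_(i < d) (x ord0 i - y ord0 i) * (y ord0 i - z ord0 i).
  by rewrite mulr_sumr -!big_split /=; apply: eq_bigr => i _; ring.
rewrite mulr2n; lra.
Qed.

Lemma dist_eq0 x y : eucl_dist x y = 0 -> x = y.
Proof.
move=> /eqP; rewrite sqrtr_eq0 => le0.
have : \sum_(i < d) (x ord0 i - y ord0 i) ^+ 2 = 0.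
  by apply/eqP; rewrite eq_le le0 sumr_ge0 // => i _; exact: sqr_ge0.
move=> /sum_sqr_eq0 xy0; apply/rowP => i.
by apply/eqP; rewrite -subr_eq0 xy0.
Qed.

End euclidean_distance.

Section measurability.
Variables (R : realType) (d : nat).
Local Notation X := (Rd R d).

Lemma measurable_coord (i : 'I_d) :
  measurable_fun [set: X] (fun y : X => (y : 'rV[R]_d) ord0 i).
Proof.
apply: (measurability _ (RGenOpens.measurableE R)).
move=> _ [_ [a [b ->] <-]]; apply: sub_sigma_algebra; rewrite setTI.
exact: (continuousP _).1 (@coord_continuous R 1 d ord0 i) _
         (@interval_open R (BRight a) (BLeft b) isT isT).
Qed.

Lemma measurable_dist :
  measurable_fun [set: X * X] (fun p : X * X => eucl_dist (p.1 : 'rV[R]_d) p.2).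
Proof.
apply: measurableT_comp; first exact: continuous_measurable_fun (@sqrt_continuous R).
apply: measurable_sum => i; apply: measurable_funX; apply: measurable_funB.
- exact: measurableT_comp (measurable_coord i) measurable_fst.
- exact: measurableT_comp (measurable_coord i) measurable_snd.
Qed.

Lemma measurable_Edist_comp d0 (T : measurableType d0) (f g : T -> X) :
  measurable_fun setT f -> measurable_fun setT g ->
  measurable_fun [set: T] (fun t => (eucl_dist (f t) (g t))%:E).
Proof.
move=> mf mg; apply/measurable_EFinP.
exact: measurableT_comp measurable_dist (measurable_fun_pair mf mg).
Qed.

Lemma measurable_Edist :
  measurable_fun [set: X * X] (fun q : X * X => (eucl_dist q.1 q.2)%:E).
Proof. exact: measurable_Edist_comp measurable_fst measurable_snd. Qed.

Lemma measurable_Edist_from (c : X) :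
  measurable_fun [set: X] (fun z : X => (eucl_dist c z)%:E).
Proof. by apply: (@measurable_Edist_comp _ X (fun=> c) id). Qed.

End measurability.

(* A finite kernel k from X, seen as a kernel from X * Y ignoring the second
   coordinate; it lets us integrate functions of (x, y) against k x. *)
Section kernel_fst.
Context d1 d2 d3 (X : measurableType d1) (Y : measurableType d2)
  (Z : measurableType d3) (R : realType) (k : R.-fker X ~> Z).

Definition kernel_fst : X * Y -> {measure set Z -> \bar R} := fun p => k p.1.

Let measurable_kernel_fst U :
  measurable U -> measurable_fun [set: X * Y] (kernel_fst ^~ U).
Proof.
by move=> mU; exact: measurableT_comp (measurable_kernel k U mU) measurable_fst.
Qed.

HB.instance Definition _ :=
  @isKernel.Build _ _ _ _ _ kernel_fst measurable_kernel_fst.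

Let kernel_fst_uub : measure_fam_uub kernel_fst.
Proof. by have [r kr] := measure_uub k; exists r => p; exact: kr. Qed.

HB.instance Definition _ :=
  @Kernel_isFinite.Build _ _ _ _ _ kernel_fst kernel_fst_uub.

End kernel_fst.

Section kernel_probability.
Context d1 d2 (X : measurableType d1) (Y : measurableType d2) (R : realType)
  (k : R.-pker X ~> Y) (x : X).

Definition kernel_at : set Y -> \bar R := k x.

HB.instance Definition _ := Measure.on kernel_at.
HB.instance Definition _ :=
  Measure_isProbability.Build _ _ _ kernel_at (@prob_kernel _ _ _ _ _ k x).

End kernel_probability.

Section coupling_marginals.
Local Open Scope ereal_scope.
Context d1 d2 (T1 : measurableType d1) (T2 : measurableType d2) (R : realType).
Variables (p : {measure set T1 -> \bar R}) (nu : {measure set T2 -> \bar R}).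
Variable g : probability (T1 * T2)%type R.
Hypothesis g_coupling : coupling p nu g.

Lemma integral_coupling_fst (h : T1 -> \bar R) :
  measurable_fun setT h -> (forall x, 0 <= h x) ->
  \int[g]_q h q.1 = \int[p]_x h x.
Proof.
move=> mh h0; transitivity (\int[pushforward g (@fst T1 T2)]_x h x).
  by rewrite ge0_integral_pushforward //; exact: measurable_fst.
apply: eq_measure_integral => A mA _; rewrite /pushforward -g_coupling.1 //.
by congr (g _); apply/seteqP; split => -[x y] //= [].
Qed.

Lemma integral_coupling_snd (h : T2 -> \bar R) :
  measurable_fun setT h -> (forall x, 0 <= h x) ->
  \int[g]_q h q.2 = \int[nu]_x h x.
Proof.
move=> mh h0; transitivity (\int[pushforward g (@snd T1 T2)]_x h x).
  by rewrite ge0_integral_pushforward //; exact: measurable_snd.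
apply: eq_measure_integral => A mA _; rewrite /pushforward -g_coupling.2 //.
by congr (g _); apply/seteqP; split => -[x y] //= [].
Qed.

End coupling_marginals.

Section distance_integrals.
Local Open Scope ereal_scope.
Variables (R : realType) (d : nat).
Local Notation X := (Rd R d).

Definition mean_dist (m : {measure set X -> \bar R}) (y : X) : \bar R :=
  \int[m]_z (eucl_dist y z)%:E.

Definition energy (m : {measure set X -> \bar R}) : \bar R :=
  \int[m]_y mean_dist m y.

Definition cost (g : {measure set (X * X)%type -> \bar R}) : \bar R :=
  \int[g]_q (eucl_dist q.1 q.2)%:E.

Lemma Edist_ge0 (y z : X) : 0 <= (eucl_dist y z)%:E.
Proof. by rewrite lee_fin dist_ge0. Qed.

Lemma mean_dist_ge0 m y : 0 <= mean_dist m y.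
Proof. by apply: integral_ge0 => z _; exact: Edist_ge0. Qed.

Lemma energy_ge0 m : 0 <= energy m.
Proof. by apply: integral_ge0 => y _; exact: mean_dist_ge0. Qed.

Lemma cost_ge0 g : 0 <= cost g.
Proof. by apply: integral_ge0 => q _; exact: Edist_ge0. Qed.

Lemma measurable_mean_dist (m : {finite_measure set X -> \bar R}) :
  measurable_fun [set: X] (mean_dist m).
Proof.
apply: (measurable_fun_fubini_tonelli_F (fun q : X * X => (eucl_dist q.1 q.2)%:E)).
  exact: measurable_Edist.
by move=> q; exact: Edist_ge0.
Qed.

Lemma measurable_energy (k : R.-fker X ~> X) :
  measurable_fun [set: X] (fun x => energy (k x)).
Proof.
have mF : measurable_fun [set: X * X] (fun p : X * X => mean_dist (k p.1) p.2).
  apply: (measurable_fun_integral_finite_kernel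
    (fun q : (X * X) * X => (eucl_dist q.1.2 q.2)%:E) (kernel_fst (Y := X) k)).
  - by move=> q; exact: Edist_ge0.
  - apply: measurable_Edist_comp; last exact: measurable_snd.
    exact: measurableT_comp measurable_snd measurable_fst.
apply: (measurable_fun_integral_finite_kernel
  (fun p : X * X => mean_dist (k p.1) p.2) k) => //.
by move=> p; exact: mean_dist_ge0.
Qed.

Lemma mean_dist_lipschitz (m : probability X R) (a b : X) :
  mean_dist m a <= (eucl_dist a b)%:E + mean_dist m b.
Proof.
have mEdist := @measurable_Edist_from R d.
rewrite -[(eucl_dist a b)%:E]mule1 -(probability_setT m) -(integral_cst m measurableT).
rewrite -ge0_integralD //; last by move=> z _; exact: Edist_ge0.
apply: ge0_le_integral => //.
- by move=> z _; exact: Edist_ge0.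
- by apply: emeasurable_funD => //; exact: measurable_cst.
- by move=> z _; rewrite /= -EFinD lee_fin dist_triangle.
- by move=> z _; exact: Edist_ge0.
Qed.

Lemma integral_mean_dist_coupling (m p nu : probability X R)
    (g : probability (X * X)%type R) : coupling p nu g ->
  \int[nu]_w mean_dist m w <= cost g + \int[p]_w mean_dist m w.
Proof.
move=> gc; have mm := measurable_mean_dist m.
rewrite -(integral_coupling_snd gc mm (mean_dist_ge0 m)).
rewrite -(integral_coupling_fst gc mm (mean_dist_ge0 m)).
rewrite -ge0_integralD //.
- apply: ge0_le_integral => //.
  + by move=> q _; exact: mean_dist_ge0.
  + exact: measurableT_comp mm measurable_snd.
  + apply: emeasurable_funD; last exact: measurableT_comp mm measurable_fst.
    exact: measurable_Edist.
  + by move=> q _; rewrite distC; exact: mean_dist_lipschitz.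
- by move=> q _; exact: Edist_ge0.
- exact: measurable_Edist.
- by move=> q _; exact: mean_dist_ge0.
- exact: measurableT_comp mm measurable_fst.
Qed.

(* Fubini and the symmetry of the distance. *)
Lemma integral_mean_dist_sym (p q : probability X R) :
  \int[p]_w mean_dist q w = \int[q]_w mean_dist p w.
Proof.
rewrite (fubini_tonelli (fun u : X * X => (eucl_dist u.1 u.2)%:E)) /=.
- by apply: eq_integral => w _; apply: eq_integral => z _; rewrite distC.
- exact: measurable_Edist.
- by move=> u; exact: Edist_ge0.
Qed.

Lemma energy_le_coupling (p nu : probability X R) (g : probability (X * X)%type R) :
  coupling p nu g -> energy nu <= cost g + (cost g + energy p).
Proof.
move=> gc; apply: le_trans (integral_mean_dist_coupling nu gc) _.
apply: leeD => //; rewrite integral_mean_dist_sym.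
exact: integral_mean_dist_coupling gc.
Qed.

End distance_integrals.

Section nonneg_integrals.
Local Open Scope ereal_scope.
Context d (T : measurableType d) (R : realType) (mu : {measure set T -> \bar R}).

(* Monotonicity of the integral of nonnegative functions, without any
   measurability assumption (the integral is a supremum over simple
   functions below the integrand). *)
Lemma le_integral_nonneg (f g : T -> \bar R) : (forall x, 0 <= f x) ->
  (forall x, f x <= g x) -> \int[mu]_x f x <= \int[mu]_x g x.
Proof.
move=> f0 fg; have g0 x : 0 <= g x by exact: le_trans (f0 x) (fg x).
rewrite !ge0_integralTE //.
apply: ge_ereal_sup => _ [h hf <-]; apply: ereal_sup_ubound; exists h => //= x.
exact: le_trans (hf x) (fg x).
Qed.

Lemma ge0_integral_eq0_null (f : T -> \bar R) :
  measurable_fun setT f -> (forall x, 0 <= f x) -> \int[mu]_x f x = 0 ->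
  exists N, [/\ measurable N, mu N = 0 & forall x, f x <> 0 -> N x].
Proof.
move=> mf f0 int0.
have : \int[mu]_(x in setT) `|f x| = 0.
  by rewrite -int0; apply: eq_integral => x _; rewrite gee0_abs.
move/(ae_eq_integral_abs mu measurableT mf) => [N [mN N0 sN]].
by exists N; split => // x fx0; apply: sN => /= fx; apply: fx0; exact: fx.
Qed.

End nonneg_integrals.

Lemma probability_concentrated d (T : measurableType d) (R : realType)
    (P : probability T R) (a : T) (N : set T) :
  measurable N -> P N = 0%E -> ~` [set a] `<=` N ->
  forall B, measurable B -> P B = \d_a B.
Proof.
move=> mN N0 aN B mB; rewrite diracE.
have [Ba|Ba] := pselect (B a).
  have : P (~` B) = 0%E.
    apply: (subset_measure0 (measurableC mB) mN) => // z Bz.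
    by apply: aN => za; apply: Bz; rewrite za.
  rewrite probability_setC // mem_set //; case: (P B) => [r||] //=.
  by rewrite -EFinB => /eqP; rewrite eqe subr_eq0 => /eqP <-.
rewrite memNset //; apply: (subset_measure0 mB mN) => // z Bz.
by apply: aN => za; apply: Ba; rewrite -za.
Qed.

Section half_gap.
Local Open Scope ereal_scope.
Variable R : realType.

Definition half_gap (c : R) (D : \bar R) : \bar R :=
  maxe ((c%:E - D) * (2^-1)%:E) 0.

Lemma half_gap_ge0 c D : 0 <= half_gap c D.
Proof. by rewrite /half_gap le_max lexx orbT. Qed.

Lemma measurable_half_gap d (T : measurableType d) (c : R) (f : T -> \bar R) :
  measurable_fun setT f -> measurable_fun setT (fun x => half_gap c (f x)).
Proof.
move=> mf; apply: measurable_maxe => //.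
by apply: emeasurable_funM => //; apply: emeasurable_funB.
Qed.

Lemma le_half_gap c D : 0 <= D -> c%:E <= D + (half_gap c D + half_gap c D).
Proof.
have : (c%:E - D) * (2^-1)%:E <= half_gap c D by rewrite /half_gap le_max lexx.
move: (half_gap_ge0 c D); case: (half_gap c D) => [l||] //; last first.
  by move=> _ _; case: D => [r||] //; rewrite addey ?leey.
case: D => [r||] // _ + r0; last by rewrite addye ?leey.
by rewrite -!EFinD -?EFinB -EFinM !lee_fin => ?; lra.
Qed.

Lemma half_gap_le c D w : 0 <= D -> 0 <= w -> c%:E <= w + (w + D) ->
  half_gap c D <= w.
Proof.
rewrite /half_gap ge_max => D0 w0 cwD; rewrite w0 andbT.
case: D D0 cwD => [r||] // r0; last first.
  by move=> _; rewrite /= gt0_mulNye ?leNye // lte_fin invr_gt0.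
case: w w0 => [w||] // w0 cwD; last by rewrite leey.
by rewrite -!EFinD -?EFinB -EFinM !lee_fin in cwD *; lra.
Qed.

Lemma le_ratio_gap (c : R) (a w : \bar R) : (0 < c)%R -> 0 <= a -> 0 <= w ->
  c%:E <= a + (w + w) -> 1 - a * (c^-1)%:E <= 2%:E * (w * (c^-1)%:E).
Proof.
move=> c_gt0 + + caw; have ci_gt0 : (0 < c^-1)%R by rewrite invr_gt0.
case: a caw => [a||] //; case: w => [w||] // caw _ _.
- rewrite -!EFinD lee_fin in caw.
  rewrite -!EFinM -EFinB lee_fin -subr_ge0.
  have -> : (2 * (w * c^-1) - (1 - a * c^-1) = (a + (w + w) - c) * c^-1)%R.
    by field; rewrite gt_eqF.
  by rewrite mulr_ge0 ?subr_ge0 // ltW.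
- by rewrite gt0_mulye ?lte_fin // gt0_muley ?lte_fin // leey.
- by rewrite gt0_mulye ?lte_fin // leNye.
- by rewrite gt0_mulye ?lte_fin // leNye.
Qed.

End half_gap.

Section wasserstein_bound.
Local Open Scope ereal_scope.
Variables (R : realType) (d : nat).
Local Notation X := (Rd R d).

Lemma W1_ge0 (p nu : set X -> \bar R) : 0 <= W1 p nu.
Proof. by apply: le_ereal_inf_tmp => _ [g _ <-]; exact: cost_ge0. Qed.

(* Averaging the key inequality over couplings: E(nu) <= 2 W1(p, nu) + E(p),
   in the form half_gap E(nu) E(p) <= W1(p, nu). *)
Lemma half_gap_le_W1 (p nu : probability X R) (c : R) :
  energy nu = c%:E -> half_gap c (energy p) <= W1 p nu.
Proof.
move=> Ec; apply: le_ereal_inf_tmp => _ [g gc <-].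
apply: half_gap_le (energy_ge0 _) (cost_ge0 _) _.
by rewrite -Ec; exact: energy_le_coupling.
Qed.

Lemma energy_lt_pinfty (nu : probability X R) :
  \int[nu]_y (eucl_dist y 0%R)%:E < +oo -> energy nu < +oo.
Proof.
have -> : \int[nu]_y (eucl_dist y 0%R)%:E = mean_dist nu 0%R.
  by apply: eq_integral => y _; rewrite distC.
move=> moment; set M := mean_dist nu 0%R.
apply: (@le_lt_trans _ _ (\int[nu]_y ((eucl_dist 0%R y)%:E + cst M y))).
  apply: ge0_le_integral => //.
  - by move=> y _; exact: mean_dist_ge0.
  - exact: measurable_mean_dist.
  - apply: emeasurable_funD; last exact: measurable_cst.
    exact: measurable_Edist_from.
  - by move=> y _; rewrite distC; exact: mean_dist_lipschitz.
rewrite ge0_integralD //.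
- rewrite integral_cst // lte_add_pinfty //.
  apply: (@le_lt_trans _ _ (M * 1)); last by rewrite mule1.
  by rewrite lee_wpmul2l ?mean_dist_ge0 ?probability_le1.
- by move=> y _; exact: Edist_ge0.
- exact: measurable_Edist_from.
- by move=> y _; exact: mean_dist_ge0.
Qed.

Lemma energy_neq0 (nu : probability X R) :
  (forall a : X, exists2 B : set X, measurable B & nu B <> \d_a B) ->
  energy nu <> 0.
Proof.
move=> not_dirac E0.
have [N [mN N0 sN]] :=
  ge0_integral_eq0_null (measurable_mean_dist nu) (mean_dist_ge0 nu) E0.
have [y0 Ny0] : exists y0, ~ N y0.
  apply: contrapT => /forallNP NT.
  have NT' : N = setT by apply/seteqP; split => // y _; exact: contrapT (NT y).
  by have := probability_setT nu; rewrite -NT' N0 => /eqP; rewrite eqe eq_sym oner_eq0.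
have y0_mean0 : mean_dist nu y0 = 0 by apply: contrapT => h; exact: Ny0 (sN _ h).
have [N' [mN' N'0 sN']] :=
  ge0_integral_eq0_null (measurable_Edist_from y0) (@Edist_ge0 R d y0) y0_mean0.
have [B mB] := not_dirac y0; apply.
apply: (probability_concentrated mN' N'0) => // z zy0; apply: sN'.
by move=> /eqP; rewrite eqe => /eqP /dist_eq0 y0z; apply: zy0.
Qed.

(* The theorem before normalisation:
   E(nu) <= \int E(k x) mu(dx) + 2 \int W1(k x, nu) mu(dx). *)
Lemma energy_le_integral_W1 (mu nu : probability X R) (k : R.-pker X ~> X) (c : R) :
  energy nu = c%:E ->
  c%:E <= \int[mu]_x energy (k x) +
          (\int[mu]_x W1 (k x) nu + \int[mu]_x W1 (k x) nu).
Proof.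
move=> Ec; have mE := measurable_energy k.
have mL := measurable_half_gap c mE.
have LW : \int[mu]_x half_gap c (energy (k x)) <= \int[mu]_x W1 (k x) nu.
  apply: le_integral_nonneg => x; first exact: half_gap_ge0.
  exact: (half_gap_le_W1 (kernel_at k x) Ec).
apply: le_trans (leeD (lexx _) (leeD LW LW)).
rewrite -ge0_integralD //; try by move=> x _; exact: half_gap_ge0.
rewrite -ge0_integralD //; last 3 first.
- by move=> x _; exact: energy_ge0.
- by move=> x _; rewrite adde_ge0 ?half_gap_ge0.
- exact: emeasurable_funD.
rewrite -[c%:E]mule1 -(probability_setT mu) -(integral_cst mu measurableT).
apply: ge0_le_integral => //.
- by move=> x _; rewrite -Ec energy_ge0.
- by apply: emeasurable_funD => //; exact: emeasurable_funD.
- by move=> x _; exact: le_half_gap (energy_ge0 _).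
Qed.

End wasserstein_bound.

Unset Implicit Arguments.
Theorem mainTheorem5 (R : realType) (d : nat)
  (mu nu : probability (Rd R d) R)
  (pi : probability (Rd R d * Rd R d)%type R)
  (k : R.-pker (Rd R d) ~> (Rd R d)) :
  (\int[nu]_y (eucl_dist y 0)%:E < +oo)%E ->
  (forall a : Rd R d, exists2 B : set (Rd R d), measurable B & nu B <> \d_a B) ->
  coupling mu nu pi ->
  disintegration mu pi k ->
  (T_DGS mu nu k <= 2%:E * W_corr mu nu k)%E.
Proof.
move=> moment not_dirac _ _.
have [c Ec c_gt0] : exists2 c : R, energy nu = c%:E & 0 < c.
  have := energy_lt_pinfty moment; have := energy_neq0 not_dirac.
  case: (energy nu) (energy_ge0 nu) => [c||] // c0 c_neq0 _.
  exists c => //; rewrite lt_def -lee_fin c0 andbT.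
  by apply/eqP => c_eq0; apply: c_neq0; rewrite c_eq0.
rewrite /T_DGS /W_corr /ediv.
change (\int[nu]_y \int[nu]_z (eucl_dist y z)%:E)%E with (energy nu); rewrite Ec /=.
apply: le_ratio_gap c_gt0 _ _ (energy_le_integral_W1 mu k Ec).
- by apply: integral_ge0 => x _; exact: energy_ge0.
- by apply: integral_ge0 => x _; exact: W1_ge0.
Qed.
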